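(* Let $H\in(0,1)$, $K\in(0,1]$, $T>0$, and let $B^{H,K}$ be a bifractional Brownian motion. Then $B^{H,K}$ satisfies (C1) with $\gamma=HK$, and (C2) with $\gamma=HK$ and $\kappa=2^{(1-K)/2}$; more precisely, for every $\varphi\in\Psi$ and small $\delta>0$, $$\sup_{\varphi(\delta)\le s\le T-\delta}\sup_{0<h\le\delta}\Big|\frac{\sigma^2_{B^{H,K}}(s,s+h)}{2^{1-K}h^{2HK}}-1\Big|\le\frac{8}{L(\delta)^{2-2HK}},\qquad L(\delta)=\varphi(\delta)/\delta.$$ Consequently $B^{H,K}$ has Orey index $HK$.
   Context: A bifractional Brownian motion with parameters $H\in(0,1)$, $K\in(0,1]$ is a centered Gaussian process $(B^{H,K}_t)_{t\ge0}$ with covariance $R_{HK}(t,s)=2^{-K}\big((t^{2H}+s^{2H})^K-|t-s|^{2HK}\big)$. $\sigma_X^2(s,t)=\mathbb{E}[X(t)-X(s)]^2$. $\Psi$: continuous $\varphi\colon(0,T]\to[0,\infty)$ with $\varphi(h)\to0$, $L(h):=\varphi(h)/h\to\infty$, $hL(h)^3\to0$ as $h\downarrow0$. (C1): $\sigma_X(0,\delta)=O(\delta^\gamma)$. (C2): there is $\kappa>0$ such that for every $\varphi\in\Psi$, $\sup_{\varphi(\delta)\le t\le T-\delta}\sup_{0<h\le\delta}|\sigma_X(t,t+h)/(\kappa h^\gamma)-1|\to0$ as $\delta\downarrow0$. Orey index: for every $\varphi\in\Psi$, $\inf\{\beta>0\colon\lim_{h\downarrow0}\sup_{\varphi(h)\le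 s\le T-h}h^\beta/\sigma_X(s,s+h)=0\}$, $\inf\{\beta>0\colon\lim_{h\downarrow0}h^\beta/\sigma_X(0,h)=0\}$, $\sup\{\beta>0\colon\lim_{h\downarrow0}\inf_{\varphi(h)\le s\le T-h}h^\beta/\sigma_X(s,s+h)=\infty\}$, $\sup\{\beta>0\colon\lim_{h\downarrow0}h^\beta/\sigma_X(0,h)=\infty\}$ all coincide. *)

From Stdlib Require Import Reals.
Open Scope R_scope.

(* Real power x^y for x >= 0, with the convention 0^y = 0 (used only with y > 0).
   Stdlib's Rpower 0 y = 1, hence this wrapper. *)
Definition rpow (x y : R) : R := if Rle_dec x 0 then 0 else Rpower x y.

Definition R_HK (H K t s : R) : R :=
  rpow 2 (- K) * (rpow (rpow t (2*H) + rpow s (2*H)) K - rpow (Rabs (t - s)) (2*H*K)).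

(* sigma_X^2(s,t) = E[X(t)-X(s)]^2 = R(t,t) + R(s,s) - 2 R(s,t) for a centered
   process with covariance R. *)
Definition sigma2_of (Rc : R -> R -> R) (s t : R) : R := Rc t t + Rc s s - 2 * Rc s t.
Definition sigma_of (Rc : R -> R -> R) (s t : R) : R := sqrt (sigma2_of Rc s t).

Definition lim0 (f : R -> R) (l : R) : Prop :=
  forall eps, 0 < eps -> exists d, 0 < d /\ forall h, 0 < h < d -> Rabs (f h - l) < eps.
Definition lim0_infty (f : R -> R) : Prop :=
  forall M, exists d, 0 < d /\ forall h, 0 < h < d -> M < f h.

Definition in_Psi (T : R) (phi : R -> R) : Prop :=
  (forall x, 0 < x <= T -> forall eps, 0 < eps -> exists d, 0 < d /\
      forall y, 0 < y <= T -> Rabs (y - x) < d -> Rabs (phi y - phi x) < eps) /\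
  (forall x, 0 < x <= T -> 0 <= phi x) /\
  lim0 phi 0 /\
  lim0_infty (fun h => phi h / h) /\
  lim0 (fun h => h * (phi h / h) ^ 3) 0.

Definition cond_C1 (sig : R -> R -> R) (gamma : R) : Prop :=
  exists C d0, 0 < d0 /\ forall delta, 0 < delta < d0 ->
    Rabs (sig 0 delta) <= C * rpow delta gamma.

Definition C2_kappa (T : R) (sig : R -> R -> R) (gamma kappa : R) : Prop :=
  0 < kappa /\
  forall phi, in_Psi T phi ->
    forall eps, 0 < eps -> exists d0, 0 < d0 /\ forall delta, 0 < delta < d0 ->
      forall t h, phi delta <= t <= T - delta -> 0 < h <= delta ->
        Rabs (sig t (t + h) / (kappa * rpow h gamma) - 1) <= eps.

Definition is_glb (E : R -> Prop) (m : R) : Prop :=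
  (forall x, E x -> m <= x) /\ (forall b, (forall x, E x -> b <= x) -> b <= m).

Definition Orey_set1 (T : R) (sig : R -> R -> R) (phi : R -> R) (beta : R) : Prop :=
  0 < beta /\ forall eps, 0 < eps -> exists d, 0 < d /\ forall h, 0 < h < d ->
    forall s, phi h <= s <= T - h -> Rabs (rpow h beta / sig s (s + h)) <= eps.
Definition Orey_set2 (sig : R -> R -> R) (beta : R) : Prop :=
  0 < beta /\ lim0 (fun h => rpow h beta / sig 0 h) 0.
Definition Orey_set3 (T : R) (sig : R -> R -> R) (phi : R -> R) (beta : R) : Prop :=
  0 < beta /\ forall M, exists d, 0 < d /\ forall h, 0 < h < d ->
    forall s, phi h <= s <= T - h -> M <= rpow h beta / sig s (s + h).
Definition Orey_set4 (sig : R -> R -> R) (beta : R) : Prop :=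
  0 < beta /\ lim0_infty (fun h => rpow h beta / sig 0 h).

Definition has_Orey_index (T : R) (sig : R -> R -> R) (alpha : R) : Prop :=
  forall phi, in_Psi T phi ->
    is_glb (Orey_set1 T sig phi) alpha /\ is_glb (Orey_set2 sig) alpha /\
    is_lub (Orey_set3 T sig phi) alpha /\ is_lub (Orey_set4 sig) alpha.

(* Write u = (1 + h/s)^(2H). Expanding the covariance gives
   sigma^2(s, s+h) = 2^(1-K) h^(2HK) - s^(2HK) q(u)  with  q(u) = 2^(1-K) (1+u)^K - u^K - 1.
   q vanishes at u = 1 and, by convexity of x^(K-1), 0 <= q'(u) <= (u-1)/4; since u - 1 <= 3h/s
   this bounds the relative defect by (9/4) (h/s)^(2-2HK) <= (9/4) L(delta)^-(2-2HK) whenever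
   s >= phi(delta) and h <= delta. Together with sigma(0,h) = h^(HK) this gives (C1), (C2) and
   the explicit rate; and as all increments are then comparable to h^(HK), the ratios
   h^beta / sigma tend to 0 for beta > HK and to infinity for beta < HK, so the Orey index is HK. *)

From Stdlib Require Import Reals Lra.
Open Scope R_scope.

Lemma Rpower_pos x y : 0 < Rpower x y.
Proof. apply exp_pos. Qed.

Lemma rpow_Rpower x y : 0 < x -> rpow x y = Rpower x y.
Proof. intros; unfold rpow; destruct (Rle_dec x 0); lra. Qed.

Lemma rpow_nonpos x y : x <= 0 -> rpow x y = 0.
Proof. intros; unfold rpow; destruct (Rle_dec x 0); lra. Qed.

Lemma Rpower_1_l y : Rpower 1 y = 1.
Proof. unfold Rpower; rewrite ln_1, Rmult_0_r; apply exp_0. Qed.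

Lemma Rpower_double x y : Rpower x (2 * y) = Rpower x y * Rpower x y.
Proof. replace (2 * y) with (y + y) by ring; apply Rpower_plus. Qed.

Lemma Rpower_Rinv_l x y : 0 < x -> Rpower (/ x) y = / Rpower x y.
Proof.
  intros Hx; rewrite <- Rpower_Ropp; unfold Rpower.
  rewrite ln_Rinv by lra; f_equal; ring.
Qed.

Lemma Rpower_le_1 x p : 1 <= x -> p <= 0 -> Rpower x p <= 1.
Proof. intros; rewrite <- (Rpower_O x) by lra; apply Rle_Rpower; lra. Qed.

Lemma Rpower_ge_1 x p : 1 <= x -> 0 <= p -> 1 <= Rpower x p.
Proof. intros; rewrite <- (Rpower_O x) by lra; apply Rle_Rpower; lra. Qed.

Lemma Rle_Rpower_l_nonpos a b p : p <= 0 -> 0 < a <= b -> Rpower b p <= Rpower a p.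
Proof.
  intros Hp Hab; replace p with (- - p) by ring; rewrite (Rpower_Ropp b), (Rpower_Ropp a).
  apply Rinv_le_contravar; [apply Rpower_pos|apply Rle_Rpower_l; lra].
Qed.

Lemma Rpower_le_1_l h p : 0 <= p -> 0 < h <= 1 -> Rpower h p <= 1.
Proof. intros; rewrite <- (Rpower_1_l p); apply Rle_Rpower_l; lra. Qed.

Lemma Rpower_ge_1_l h p : p <= 0 -> 0 < h <= 1 -> 1 <= Rpower h p.
Proof. intros; rewrite <- (Rpower_1_l p); apply Rle_Rpower_l_nonpos; lra. Qed.

Lemma Rpower_small_near0 p eps : 0 < p -> 0 < eps ->
  exists d, 0 < d /\ forall h, 0 < h < d -> Rpower h p < eps.
Proof.
  intros Hp Heps; exists (Rpower eps (/ p)); split; [apply Rpower_pos|].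
  intros h Hh.
  replace eps with (Rpower (Rpower eps (/ p)) p)
    by (rewrite Rpower_mult, Rinv_l by lra; apply Rpower_1; lra).
  apply Rlt_Rpower_l; lra.
Qed.

Lemma Rpower_large_near0 p M : p < 0 ->
  exists d, 0 < d /\ forall h, 0 < h < d -> M < Rpower h p.
Proof.
  intros Hp; set (M' := Rabs M + 1).
  assert (HM : M < M' /\ 0 < M')
    by (unfold M'; pose proof (Rle_abs M); pose proof (Rabs_pos M); lra).
  destruct (Rpower_small_near0 (- p) (/ M')) as [d [Hd Hsmall]];
    [lra|apply Rinv_0_lt_compat; lra|].
  exists d; split; [exact Hd|]; intros h Hh.
  replace p with (- - p) by ring; rewrite Rpower_Ropp.
  apply Rlt_trans with M'; [lra|].
  rewrite <- (Rinv_inv M'); apply Rinv_lt_contravar; [|apply Hsmall; lra].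
  apply Rmult_lt_0_compat; [apply Rpower_pos|apply Rinv_0_lt_compat; lra].
Qed.

Lemma Rpower_ge_tangent p v : p <= 0 -> 1 <= v -> 1 + p * (v - 1) <= Rpower v p.
Proof.
  intros Hp Hv; destruct (Req_dec v 1) as [->|Hv1]; [rewrite Rpower_1_l; lra|].
  destruct (MVT_cor2 (fun x => Rpower x p - p * x) (fun x => p * Rpower x (p - 1) - p * 1) 1 v)
    as [c [Hmvt Hc]]; [lra| |].
  - intros x Hx; apply derivable_pt_lim_minus; [apply derivable_pt_lim_power; lra|].
    apply derivable_pt_lim_scal, derivable_pt_lim_id.
  - rewrite Rpower_1_l in Hmvt.
    assert (Rpower c (p - 1) <= 1) by (apply Rpower_le_1; lra).
    assert (0 <= p * (Rpower c (p - 1) - 1)) by nra.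
    nra.
Qed.

Definition bifrac_defect (K u : R) : R :=
  Rpower 2 (1 - K) * Rpower (1 + u) K - Rpower u K - 1.

Lemma bifrac_defect_derivative K x : 0 < x ->
  derivable_pt_lim (bifrac_defect K) x (K * (Rpower ((1 + x) / 2) (K - 1) - Rpower x (K - 1))).
Proof.
  intros Hx.
  replace (K * (Rpower ((1 + x) / 2) (K - 1) - Rpower x (K - 1)))
    with (Rpower 2 (1 - K) * (K * Rpower (1 + x) (K - 1) * 1) - K * Rpower x (K - 1) - 0).
  2:{ unfold Rdiv; rewrite <- Rpower_mult_distr, Rpower_Rinv_l, <- Rpower_Ropp by lra.
      replace (- (K - 1)) with (1 - K) by ring; ring. }
  apply derivable_pt_lim_minus; [apply derivable_pt_lim_minus|apply derivable_pt_lim_const].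
  - apply derivable_pt_lim_scal.
    apply (derivable_pt_lim_comp (fun v => 1 + v) (fun v => Rpower v K)).
    + rewrite <- (Rplus_0_l 1) at 1.
      apply derivable_pt_lim_plus; [apply derivable_pt_lim_const|apply derivable_pt_lim_id].
    + apply derivable_pt_lim_power; lra.
  - apply derivable_pt_lim_power; lra.
Qed.

Lemma bifrac_defect_slope_bounds K x : 0 < K <= 1 -> 1 <= x ->
  0 <= K * (Rpower ((1 + x) / 2) (K - 1) - Rpower x (K - 1)) <= (x - 1) / 4.
Proof.
  intros HK Hx.
  assert (Hmid : Rpower ((1 + x) / 2) (K - 1) <= 1) by (apply Rpower_le_1; lra).
  assert (Hmono : Rpower x (K - 1) <= Rpower ((1 + x) / 2) (K - 1))
    by (apply Rle_Rpower_l_nonpos; lra).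
  assert (Htan := Rpower_ge_tangent (K - 1) x ltac:(lra) Hx).
  assert (HK4 : K * (1 - K) <= / 4) by (pose proof (pow2_ge_0 (K - / 2)); nra).
  split; [nra|].
  assert (K * (Rpower ((1 + x) / 2) (K - 1) - Rpower x (K - 1)) <= K * ((1 - K) * (x - 1)))
    by (apply Rmult_le_compat_l; lra).
  nra.
Qed.

Lemma bifrac_defect_bounds K u : 0 < K <= 1 -> 1 <= u ->
  0 <= bifrac_defect K u <= (u - 1) ^ 2 / 4.
Proof.
  intros HK Hu.
  assert (Hq1 : bifrac_defect K 1 = 0).
  { unfold bifrac_defect; rewrite Rpower_1_l; replace (1 + 1) with 2 by ring.
    rewrite <- Rpower_plus; replace (1 - K + K) with 1 by ring; rewrite Rpower_1; lra. }
  destruct (Req_dec u 1) as [->|Hu1]; [rewrite Hq1; lra|].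
  destruct (MVT_cor2 (bifrac_defect K)
    (fun x => K * (Rpower ((1 + x) / 2) (K - 1) - Rpower x (K - 1))) 1 u) as [c [Hmvt Hc]];
    [lra|intros x Hx; apply bifrac_defect_derivative; lra|].
  rewrite Hq1 in Hmvt.
  destruct (bifrac_defect_slope_bounds K c HK ltac:(lra)).
  simpl; nra.
Qed.

Lemma R_HK_diag H K t : 0 < t -> R_HK H K t t = Rpower t (2 * H * K).
Proof.
  intros Ht; unfold R_HK.
  rewrite Rminus_diag, Rabs_R0, (rpow_nonpos 0), (rpow_Rpower t), (rpow_Rpower 2) by lra.
  rewrite rpow_Rpower by (pose proof (Rpower_pos t (2 * H)); lra).
  replace (Rpower t (2 * H) + Rpower t (2 * H)) with (2 * Rpower t (2 * H)) by ring.
  rewrite <- Rpower_mult_distr, Rpower_mult by (try apply Rpower_pos; lra).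
  rewrite Rminus_0_r, <- Rmult_assoc, <- Rpower_plus.
  replace (- K + K) with 0 by ring; rewrite Rpower_O; lra.
Qed.

Lemma R_HK_0_l H K t : 0 <= t -> R_HK H K 0 t = 0.
Proof.
  intros Ht; unfold R_HK; rewrite (rpow_nonpos 0), Rplus_0_l, Rminus_0_l, Rabs_Ropp by lra.
  destruct (Req_dec t 0) as [->|Ht0].
  - rewrite Rabs_R0, !(rpow_nonpos 0) by lra; ring.
  - rewrite Rabs_pos_eq, !(rpow_Rpower t) by lra.
    rewrite (rpow_Rpower (Rpower t _)), Rpower_mult by apply Rpower_pos; ring.
Qed.

Lemma sigma2_from_0 H K h : 0 < h -> sigma2_of (R_HK H K) 0 h = Rpower h (2 * H * K).
Proof.
  intros Hh; unfold sigma2_of; rewrite R_HK_diag, !R_HK_0_l by lra; ring.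
Qed.

Lemma sigma_from_0 H K h : 0 < h -> sigma_of (R_HK H K) 0 h = Rpower h (H * K).
Proof.
  intros Hh; unfold sigma_of; rewrite sigma2_from_0 by exact Hh.
  replace (2 * H * K) with (2 * (H * K)) by ring; rewrite Rpower_double.
  apply sqrt_square; left; apply Rpower_pos.
Qed.

Lemma sigma2_defect_eq H K s h : 0 < s -> 0 < h ->
  Rpower 2 (1 - K) * Rpower h (2 * H * K) - sigma2_of (R_HK H K) s (s + h)
  = Rpower s (2 * H * K) * bifrac_defect K (Rpower (1 + h / s) (2 * H)).
Proof.
  intros Hs Hh.
  set (u := Rpower (1 + h / s) (2 * H)).
  assert (Hu : 0 < u) by apply Rpower_pos.
  assert (Hsh : Rpower (s + h) (2 * H) = Rpower s (2 * H) * u).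
  { assert (0 < h / s) by (apply Rdiv_lt_0_compat; lra).
    unfold u; rewrite Rpower_mult_distr by lra.
    f_equal; field; lra. }
  assert (Hpow : forall x, 0 < x -> Rpower x (2 * H * K) = Rpower (Rpower x (2 * H)) K)
    by (intros; rewrite Rpower_mult; reflexivity).
  assert (H2 : Rpower 2 (1 - K) = 2 * Rpower 2 (- K)).
  { replace (1 - K) with (1 + - K) by ring; rewrite Rpower_plus, Rpower_1; lra. }
  unfold sigma2_of; rewrite !R_HK_diag by lra; unfold R_HK, bifrac_defect.
  replace (Rabs (s - (s + h))) with h by (rewrite Rabs_left by lra; ring).
  rewrite (rpow_Rpower s), (rpow_Rpower (s + h)), (rpow_Rpower h), (rpow_Rpower 2) by lra.
  rewrite rpow_Rpower
    by (pose proof (Rpower_pos s (2 * H)); pose proof (Rpower_pos (s + h) (2 * H)); lra).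
  rewrite !Hpow, Hsh by lra.
  replace (Rpower s (2 * H) + Rpower s (2 * H) * u) with (Rpower s (2 * H) * (1 + u)) by ring.
  rewrite <- !Rpower_mult_distr by (try apply Rpower_pos; lra).
  rewrite H2; ring.
Qed.

Lemma sigma2_defect_bounds H K s h : 0 < H < 1 -> 0 < K <= 1 -> 0 < h <= s ->
  0 <= Rpower 2 (1 - K) * Rpower h (2 * H * K) - sigma2_of (R_HK H K) s (s + h)
    <= 9 / 4 * Rpower h (2 * H * K) * Rpower (h / s) (2 - 2 * H * K).
Proof.
  intros HH HK Hhs.
  set (x := h / s).
  assert (Hx : 0 < x <= 1).
  { unfold x; split; [apply Rdiv_lt_0_compat; lra|].
    apply (Rmult_le_reg_r s); [lra|]; field_simplify; lra. }
  rewrite sigma2_defect_eq by lra; fold x.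
  set (u := Rpower (1 + x) (2 * H)).
  assert (Hu1 : 1 <= u) by (apply Rpower_ge_1; lra).
  assert (Hu : u - 1 <= 3 * x).
  { assert (u <= (1 + x) ^ 2).
    { unfold u; rewrite <- Rpower_pow by lra; apply Rle_Rpower; simpl; lra. }
    nra. }
  assert (Hscale : Rpower s (2 * H * K) * x ^ 2
                   = Rpower h (2 * H * K) * Rpower x (2 - 2 * H * K)).
  { replace (2 - 2 * H * K) with (INR 2 + - (2 * H * K)) by (simpl; ring).
    rewrite Rpower_plus, Rpower_Ropp, Rpower_pow by lra.
    replace h with (s * x) at 1 by (unfold x; field; lra).
    rewrite <- Rpower_mult_distr by lra.
    field; apply Rgt_not_eq, Rpower_pos. }
  destruct (bifrac_defect_bounds K u HK Hu1) as [Hq0 Hq1].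
  assert (Hs : 0 < Rpower s (2 * H * K)) by apply Rpower_pos.
  split; [nra|].
  assert ((u - 1) ^ 2 <= 9 * x ^ 2) by nra.
  assert (Rpower s (2 * H * K) * bifrac_defect K u <= Rpower s (2 * H * K) * (9 / 4 * x ^ 2))
    by (apply Rmult_le_compat_l; lra).
  lra.
Qed.

Lemma sigma2_rel_defect H K s h delta Phi : 0 < H < 1 -> 0 < K <= 1 ->
  0 < delta < Phi -> Phi <= s -> 0 < h <= delta ->
  0 <= 1 - sigma2_of (R_HK H K) s (s + h) / (Rpower 2 (1 - K) * Rpower h (2 * H * K))
    <= 9 / 4 / Rpower (Phi / delta) (2 - 2 * H * K).
Proof.
  intros HH HK Hdelta Hs Hh.
  destruct (sigma2_defect_bounds H K s h HH HK ltac:(lra)) as [Hlo Hhi].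
  set (c := Rpower 2 (1 - K)) in *; set (P := Rpower h (2 * H * K)) in *.
  set (A := sigma2_of (R_HK H K) s (s + h)) in *.
  assert (Hc : 1 <= c) by (apply Rpower_ge_1; lra).
  assert (HP : 0 < P) by apply Rpower_pos.
  assert (He : 0 <= 2 - 2 * H * K) by nra.
  assert (HX : Rpower (h / s) (2 - 2 * H * K) <= / Rpower (Phi / delta) (2 - 2 * H * K)).
  { rewrite <- Rpower_Rinv_l, Rinv_div by (apply Rdiv_lt_0_compat; lra).
    apply Rle_Rpower_l; [exact He|split; [apply Rdiv_lt_0_compat; lra|]].
    apply Rmult_le_compat; try lra; [left; apply Rinv_0_lt_compat; lra|].
    apply Rinv_le_contravar; lra. }
  set (Z := / Rpower (Phi / delta) (2 - 2 * H * K)) in *.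
  assert (0 < Z) by (apply Rinv_0_lt_compat, Rpower_pos).
  change (9 / 4 / Rpower (Phi / delta) (2 - 2 * H * K)) with (9 / 4 * Z).
  replace (1 - A / (c * P)) with ((c * P - A) / (c * P)) by (field; nra).
  split; [apply Rmult_le_pos; [lra|left; apply Rinv_0_lt_compat; nra]|].
  apply (Rmult_le_reg_r (c * P)); [nra|].
  unfold Rdiv; rewrite Rmult_assoc, Rinv_l, Rmult_1_r by nra.
  assert (P * Rpower (h / s) (2 - 2 * H * K) <= P * Z) by (apply Rmult_le_compat_l; lra).
  assert (P * Z <= c * P * Z) by nra.
  lra.
Qed.

Lemma lim0_infty_Rpower f e : 0 < e -> lim0_infty f -> lim0_infty (fun h => Rpower (f h) e).
Proof.
  intros He Hf M.
  set (M' := Rabs M + 1).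
  assert (HM : M < M' /\ 0 < M')
    by (unfold M'; pose proof (Rle_abs M); pose proof (Rabs_pos M); lra).
  destruct (Hf (Rpower M' (/ e))) as [d [Hd Hlarge]].
  exists d; split; [exact Hd|]; intros h Hh.
  apply Rlt_trans with M'; [lra|].
  replace M' with (Rpower (Rpower M' (/ e)) e) at 1
    by (rewrite Rpower_mult, Rinv_l by lra; apply Rpower_1; lra).
  apply Rlt_Rpower_l; [exact He|split; [apply Rpower_pos|apply Hlarge, Hh]].
Qed.

Lemma Psi_ratio_large T phi e M : in_Psi T phi -> 0 < e ->
  exists d, 0 < d /\ forall delta, 0 < delta < d ->
    delta < phi delta /\ M < Rpower (phi delta / delta) e.
Proof.
  intros (_ & _ & _ & Hinf & _) He.
  destruct (Hinf 1) as [d1 [Hd1 Hgt1]].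
  destruct (lim0_infty_Rpower _ e He Hinf M) as [d2 [Hd2 HgtM]].
  exists (Rmin d1 d2); split; [apply Rmin_pos; lra|]; intros delta Hdelta.
  pose proof (Rmin_l d1 d2); pose proof (Rmin_r d1 d2).
  split; [|apply HgtM; lra].
  specialize (Hgt1 delta ltac:(lra)).
  apply (Rmult_lt_compat_r delta) in Hgt1; [|lra].
  unfold Rdiv in Hgt1; rewrite Rmult_assoc, Rinv_l in Hgt1 by lra; lra.
Qed.

Lemma sigma2_rel_defect_near0 H K T phi : 0 < H < 1 -> 0 < K <= 1 -> in_Psi T phi ->
  forall eta, 0 < eta -> exists d, 0 < d /\ forall delta, 0 < delta < d ->
    forall s h, phi delta <= s -> 0 < h <= delta ->
      0 <= 1 - sigma2_of (R_HK H K) s (s + h) / (Rpower 2 (1 - K) * Rpower h (2 * H * K)) <= eta.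
Proof.
  intros HH HK Hpsi eta Heta.
  destruct (Psi_ratio_large T phi (2 - 2 * H * K) (9 / 4 / eta) Hpsi ltac:(nra))
    as [d [Hd Hlarge]].
  exists d; split; [exact Hd|]; intros delta Hdelta s h Hs Hh.
  destruct (Hlarge delta Hdelta) as [Hphi HM].
  destruct (sigma2_rel_defect H K s h delta (phi delta) HH HK ltac:(lra) Hs Hh) as [Hlo Hhi].
  split; [exact Hlo|]; apply Rle_trans with (1 := Hhi).
  set (X := Rpower (phi delta / delta) (2 - 2 * H * K)) in *.
  apply (Rmult_le_reg_r X); [apply Rlt_trans with (9 / 4 / eta); [apply Rdiv_lt_0_compat|]; lra|].
  unfold Rdiv at 1; rewrite Rmult_assoc, Rinv_l, Rmult_1_r
    by (apply Rgt_not_eq, Rlt_trans with (9 / 4 / eta); [apply Rdiv_lt_0_compat|]; lra).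
  apply (Rmult_lt_compat_l eta) in HM; [|exact Heta].
  replace (eta * (9 / 4 / eta)) with (9 / 4) in HM by (field; lra); lra.
Qed.

Lemma sqrt_rel_error A B eta : 0 < B -> eta <= 1 -> 0 <= 1 - A / B <= eta ->
  Rabs (sqrt A / sqrt B - 1) <= eta.
Proof.
  intros HB Heta Hrel.
  rewrite <- sqrt_div_alt by exact HB.
  set (y := A / B) in *.
  assert (Hy1 : sqrt y <= 1) by (rewrite <- sqrt_1; apply sqrt_le_1_alt; lra).
  assert (Hy : y <= sqrt y).
  { rewrite <- (sqrt_sqrt y) at 1 by lra.
    pose proof (sqrt_pos y); nra. }
  rewrite Rabs_left1; lra.
Qed.

Lemma sqrt_between Q A : 0 <= Q -> Q * Q / 4 <= A <= 4 * (Q * Q) -> Q / 2 <= sqrt A <= 2 * Q.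
Proof.
  intros HQ HA; split.
  - rewrite <- (sqrt_square (Q / 2)) by lra; apply sqrt_le_1_alt; lra.
  - rewrite <- (sqrt_square (2 * Q)) by lra; apply sqrt_le_1_alt; lra.
Qed.

Definition vanishes_near0 (D : R -> R -> Prop) (f : R -> R -> R) : Prop :=
  forall eps, 0 < eps -> exists d, 0 < d /\
    forall h, 0 < h < d -> forall s, D h s -> Rabs (f h s) <= eps.

Definition diverges_near0 (D : R -> R -> Prop) (f : R -> R -> R) : Prop :=
  forall M, exists d, 0 < d /\ forall h, 0 < h < d -> forall s, D h s -> M <= f h s.

Lemma lim0_vanishes_near0 f : lim0 f 0 <-> vanishes_near0 (fun _ _ => True) (fun h _ => f h).
Proof.
  split.
  - intros Hf eps Heps; destruct (Hf eps Heps) as [d [Hd Hsmall]].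
    exists d; split; [exact Hd|]; intros h Hh _ _.
    specialize (Hsmall h Hh); rewrite Rminus_0_r in Hsmall; lra.
  - intros Hf eps Heps; destruct (Hf (eps / 2) ltac:(lra)) as [d [Hd Hsmall]].
    exists d; split; [exact Hd|]; intros h Hh.
    specialize (Hsmall h Hh 0 I); rewrite Rminus_0_r; lra.
Qed.

Lemma lim0_infty_diverges_near0 f :
  lim0_infty f <-> diverges_near0 (fun _ _ => True) (fun h _ => f h).
Proof.
  split.
  - intros Hf M; destruct (Hf M) as [d [Hd Hlarge]].
    exists d; split; [exact Hd|]; intros h Hh _ _; left; apply Hlarge, Hh.
  - intros Hf M; destruct (Hf (M + 1)) as [d [Hd Hlarge]].
    exists d; split; [exact Hd|]; intros h Hh; specialize (Hlarge h Hh 0 I); lra.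
Qed.

Lemma is_glb_threshold (S : R -> Prop) g :
  (forall b, S b -> g <= b) -> (forall b, g < b -> S b) -> is_glb S g.
Proof.
  intros Hlow Hmem; split; [exact Hlow|].
  intros b Hb; apply Rnot_lt_le; intros Hgb.
  specialize (Hb ((g + b) / 2) (Hmem ((g + b) / 2) ltac:(lra))); lra.
Qed.

Lemma is_lub_threshold (S : R -> Prop) g : 0 < g ->
  (forall b, S b -> b <= g) -> (forall b, 0 < b < g -> S b) -> is_lub S g.
Proof.
  intros Hg Hup Hmem; split; [exact Hup|].
  intros b Hb; apply Rnot_lt_le; intros Hbg.
  set (b' := (Rmax b 0 + g) / 2).
  assert (Hb' : Rmax b 0 < b' < g) by (unfold b', Rmax; destruct (Rle_dec b 0); lra).
  specialize (Hb b' (Hmem b' ltac:(pose proof (Rmax_r b 0); lra))).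
  pose proof (Rmax_l b 0); lra.
Qed.

Section OreyExponents.

Variables (g : R) (D : R -> R -> Prop) (F : R -> R -> R).
Hypothesis g_pos : 0 < g.
Hypothesis F_comparable : exists d, 0 < d /\ forall h, 0 < h < d -> forall s, D h s ->
  Rpower h g / 2 <= F h s <= 2 * Rpower h g.
Hypothesis D_near0 : forall d, 0 < d -> exists h s, 0 < h < d /\ D h s.

Lemma ratio_between beta : exists d, 0 < d /\ d <= 1 /\ forall h, 0 < h < d -> forall s, D h s ->
  0 < rpow h beta / F h s /\
  Rpower h (beta - g) / 2 <= rpow h beta / F h s <= 2 * Rpower h (beta - g).
Proof.
  destruct F_comparable as [d [Hd Hcomp]].
  exists (Rmin d 1); split; [apply Rmin_pos; lra|split; [apply Rmin_r|]].
  intros h Hh s Hs; pose proof (Rmin_l d 1).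
  destruct (Hcomp h ltac:(lra) s Hs) as [Hlo Hhi].
  rewrite rpow_Rpower by lra.
  assert (Hsplit : Rpower h beta = Rpower h (beta - g) * Rpower h g)
    by (rewrite <- Rpower_plus; f_equal; ring).
  pose proof (Rpower_pos h g); pose proof (Rpower_pos h (beta - g)).
  assert (HF : 0 < F h s) by lra.
  split; [apply Rdiv_lt_0_compat; [apply Rpower_pos|lra]|].
  rewrite Hsplit; split.
  - apply (Rmult_le_reg_r (F h s)); [lra|].
    unfold Rdiv at 2; rewrite Rmult_assoc, Rinv_l, Rmult_1_r by lra; nra.
  - apply (Rmult_le_reg_r (F h s)); [lra|].
    unfold Rdiv; rewrite Rmult_assoc, Rinv_l, Rmult_1_r by lra; nra.
Qed.

Lemma vanishes_ratio beta : g < beta -> vanishes_near0 D (fun h s => rpow h beta / F h s).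
Proof.
  intros Hbeta eps Heps.
  destruct (ratio_between beta) as [d1 [Hd1 [_ Hratio]]].
  destruct (Rpower_small_near0 (beta - g) (eps / 2) ltac:(lra) ltac:(lra)) as [d2 [Hd2 Hsmall]].
  exists (Rmin d1 d2); split; [apply Rmin_pos; lra|]; intros h Hh s Hs.
  pose proof (Rmin_l d1 d2); pose proof (Rmin_r d1 d2).
  destruct (Hratio h ltac:(lra) s Hs) as [Hpos [_ Hhi]].
  specialize (Hsmall h ltac:(lra)).
  rewrite Rabs_pos_eq; lra.
Qed.

Lemma vanishes_ratio_ge beta : vanishes_near0 D (fun h s => rpow h beta / F h s) -> g <= beta.
Proof.
  intros Hvan; apply Rnot_lt_le; intros Hbeta.
  destruct (ratio_between beta) as [d1 [Hd1 [Hd11 Hratio]]].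
  destruct (Hvan (/ 4) ltac:(lra)) as [d2 [Hd2 Hsmall]].
  destruct (D_near0 (Rmin d1 d2) ltac:(apply Rmin_pos; lra)) as [h [s [Hh Hs]]].
  pose proof (Rmin_l d1 d2); pose proof (Rmin_r d1 d2).
  destruct (Hratio h ltac:(lra) s Hs) as [Hpos [Hlo _]].
  specialize (Hsmall h ltac:(lra) s Hs); rewrite Rabs_pos_eq in Hsmall by lra.
  pose proof (Rpower_ge_1_l h (beta - g) ltac:(lra) ltac:(lra)); lra.
Qed.

Lemma diverges_ratio beta : beta < g -> diverges_near0 D (fun h s => rpow h beta / F h s).
Proof.
  intros Hbeta M.
  destruct (ratio_between beta) as [d1 [Hd1 [_ Hratio]]].
  destruct (Rpower_large_near0 (beta - g) (2 * M) ltac:(lra)) as [d2 [Hd2 Hlarge]].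
  exists (Rmin d1 d2); split; [apply Rmin_pos; lra|]; intros h Hh s Hs.
  pose proof (Rmin_l d1 d2); pose proof (Rmin_r d1 d2).
  destruct (Hratio h ltac:(lra) s Hs) as [_ [Hlo _]].
  specialize (Hlarge h ltac:(lra)); lra.
Qed.

Lemma diverges_ratio_le beta : diverges_near0 D (fun h s => rpow h beta / F h s) -> beta <= g.
Proof.
  intros Hdiv; apply Rnot_lt_le; intros Hbeta.
  destruct (ratio_between beta) as [d1 [Hd1 [Hd11 Hratio]]].
  destruct (Hdiv 3) as [d2 [Hd2 Hlarge]].
  destruct (D_near0 (Rmin d1 d2) ltac:(apply Rmin_pos; lra)) as [h [s [Hh Hs]]].
  pose proof (Rmin_l d1 d2); pose proof (Rmin_r d1 d2).
  destruct (Hratio h ltac:(lra) s Hs) as [_ [_ Hhi]].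
  specialize (Hlarge h ltac:(lra) s Hs).
  pose proof (Rpower_le_1_l h (beta - g) ltac:(lra) ltac:(lra)); lra.
Qed.

End OreyExponents.

Lemma Psi_domain_near0 T phi : 0 < T -> in_Psi T phi ->
  forall d, 0 < d -> exists h s, 0 < h < d /\ phi h <= s <= T - h.
Proof.
  intros HT (_ & _ & Hphi0 & _) d Hd.
  destruct (Hphi0 (T / 2) ltac:(lra)) as [d' [Hd' Hsmall]].
  set (h := Rmin d (Rmin d' T) / 2).
  assert (Hh : 0 < h < d /\ h < d' /\ h <= T / 2).
  { pose proof (Rmin_l d (Rmin d' T)); pose proof (Rmin_r d (Rmin d' T)).
    pose proof (Rmin_l d' T); pose proof (Rmin_r d' T).
    assert (0 < Rmin d (Rmin d' T)) by (apply Rmin_pos; [|apply Rmin_pos]; lra).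
    unfold h; lra. }
  exists h, (phi h); split; [lra|].
  specialize (Hsmall h ltac:(lra)); rewrite Rminus_0_r in Hsmall.
  pose proof (Rle_abs (phi h)); lra.
Qed.

Lemma has_Orey_index_of_comparable T sig g : 0 < T -> 0 < g ->
  (forall h, 0 < h -> sig 0 h = Rpower h g) ->
  (forall phi, in_Psi T phi -> exists d, 0 < d /\ forall h, 0 < h < d ->
     forall s, phi h <= s <= T - h -> Rpower h g / 2 <= sig s (s + h) <= 2 * Rpower h g) ->
  has_Orey_index T sig g.
Proof.
  intros HT Hg Horigin Hcomp phi Hpsi.
  set (Dphi := fun h s => phi h <= s <= T - h).
  (* The two quantities at the origin are the case of a domain in which [s] plays no role. *)
  set (Dorigin := fun (_ _ : R) => True).
  assert (Hcomp0 : exists d, 0 < d /\ forall h, 0 < h < d -> forall s : R, Dorigin h s ->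
                     Rpower h g / 2 <= sig 0 h <= 2 * Rpower h g).
  { exists 1; split; [lra|]; intros h Hh _ _.
    rewrite Horigin by lra; pose proof (Rpower_pos h g); lra. }
  assert (Hnear0 : forall d, 0 < d -> exists h s, 0 < h < d /\ Dorigin h s)
    by (intros d Hd; exists (d / 2), 0; unfold Dorigin; split; [lra|exact I]).
  pose proof (Hcomp phi Hpsi) as Hcompphi.
  pose proof (Psi_domain_near0 T phi HT Hpsi) as Hnearphi.
  split; [|split; [|split]].
  - apply is_glb_threshold.
    + intros beta [_ Hvan]; exact (vanishes_ratio_ge g Dphi _ Hcompphi Hnearphi beta Hvan).
    + intros beta Hbeta; split; [lra|exact (vanishes_ratio g Dphi _ Hcompphi beta Hbeta)].
  - apply is_glb_threshold.
    + intros beta [_ Hvan]; apply lim0_vanishes_near0 in Hvan.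
      exact (vanishes_ratio_ge g Dorigin _ Hcomp0 Hnear0 beta Hvan).
    + intros beta Hbeta; split; [lra|]; apply lim0_vanishes_near0.
      exact (vanishes_ratio g Dorigin _ Hcomp0 beta Hbeta).
  - apply is_lub_threshold; [exact Hg| |].
    + intros beta [_ Hdiv]; exact (diverges_ratio_le g Dphi _ Hcompphi Hnearphi beta Hdiv).
    + intros beta Hbeta; split; [lra|exact (diverges_ratio g Dphi _ Hcompphi beta ltac:(lra))].
  - apply is_lub_threshold; [exact Hg| |].
    + intros beta [_ Hdiv]; apply lim0_infty_diverges_near0 in Hdiv.
      exact (diverges_ratio_le g Dorigin _ Hcomp0 Hnear0 beta Hdiv).
    + intros beta Hbeta; split; [lra|]; apply lim0_infty_diverges_near0.
      exact (diverges_ratio g Dorigin _ Hcomp0 beta ltac:(lra)).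
Qed.

Lemma bifrac_cond_C1 H K : cond_C1 (sigma_of (R_HK H K)) (H * K).
Proof.
  exists 1, 1; split; [lra|]; intros delta Hdelta.
  rewrite sigma_from_0, rpow_Rpower, Rabs_pos_eq by (try left; try apply Rpower_pos; lra).
  lra.
Qed.

Lemma bifrac_sigma2_rel_error H K T phi : 0 < H < 1 -> 0 < K <= 1 -> in_Psi T phi ->
  exists d, 0 < d /\ forall delta, 0 < delta < d ->
    forall s h, phi delta <= s <= T - delta -> 0 < h <= delta ->
      Rabs (sigma2_of (R_HK H K) s (s + h) / (rpow 2 (1 - K) * rpow h (2 * H * K)) - 1)
        <= 8 / rpow (phi delta / delta) (2 - 2 * H * K).
Proof.
  intros HH HK Hpsi.
  destruct (Psi_ratio_large T phi (2 - 2 * H * K) 0 Hpsi ltac:(nra)) as [d [Hd Hlarge]].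
  exists d; split; [exact Hd|]; intros delta Hdelta s h Hs Hh.
  destruct (Hlarge delta Hdelta) as [Hphi HX].
  destruct (sigma2_rel_defect H K s h delta (phi delta) HH HK ltac:(lra) ltac:(lra) Hh)
    as [Hlo Hhi].
  rewrite !rpow_Rpower by (try apply Rdiv_lt_0_compat; lra).
  rewrite Rabs_left1 by lra.
  apply Rle_trans with (9 / 4 / Rpower (phi delta / delta) (2 - 2 * H * K)); [lra|].
  unfold Rdiv; apply Rmult_le_compat_r; [left; apply Rinv_0_lt_compat|]; lra.
Qed.

Lemma bifrac_C2 H K T : 0 < H < 1 -> 0 < K <= 1 ->
  C2_kappa T (sigma_of (R_HK H K)) (H * K) (rpow 2 ((1 - K) / 2)).
Proof.
  intros HH HK; rewrite rpow_Rpower by lra; split; [apply Rpower_pos|].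
  intros phi Hpsi eps Heps.
  destruct (sigma2_rel_defect_near0 H K T phi HH HK Hpsi (Rmin eps 1) ltac:(apply Rmin_pos; lra))
    as [d [Hd Hnear]].
  exists d; split; [exact Hd|]; intros delta Hdelta t h Ht Hh.
  assert (Hkappa : Rpower 2 ((1 - K) / 2) * Rpower h (H * K)
                   = sqrt (Rpower 2 (1 - K) * Rpower h (2 * H * K))).
  { replace (1 - K) with (2 * ((1 - K) / 2)) at 2 by field.
    replace (2 * H * K) with (2 * (H * K)) by ring.
    rewrite !Rpower_double.
    set (a := Rpower 2 ((1 - K) / 2)); set (b := Rpower h (H * K)).
    replace (a * a * (b * b)) with ((a * b) * (a * b)) by ring.
    rewrite sqrt_square; [reflexivity|].
    left; apply Rmult_lt_0_compat; apply Rpower_pos. }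
  rewrite rpow_Rpower, Hkappa by lra; unfold sigma_of.
  apply Rle_trans with (Rmin eps 1); [|apply Rmin_l].
  apply sqrt_rel_error; [apply Rmult_lt_0_compat; apply Rpower_pos|apply Rmin_r|].
  apply (Hnear delta); lra.
Qed.

Lemma bifrac_sigma_comparable H K T phi : 0 < H < 1 -> 0 < K <= 1 -> in_Psi T phi ->
  exists d, 0 < d /\ forall h, 0 < h < d -> forall s, phi h <= s <= T - h ->
    Rpower h (H * K) / 2 <= sigma_of (R_HK H K) s (s + h) <= 2 * Rpower h (H * K).
Proof.
  intros HH HK Hpsi.
  destruct (sigma2_rel_defect_near0 H K T phi HH HK Hpsi (/ 2) ltac:(lra)) as [d [Hd Hnear]].
  exists d; split; [exact Hd|]; intros h Hh s Hs; unfold sigma_of.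
  destruct (Hnear h Hh s h ltac:(lra) ltac:(lra)) as [Hlo Hhi].
  assert (Hc : 1 <= Rpower 2 (1 - K) <= 2).
  { split; [apply Rpower_ge_1; lra|].
    rewrite <- (Rpower_1 2) at 2 by lra; apply Rle_Rpower; lra. }
  replace (2 * H * K) with (2 * (H * K)) in Hlo, Hhi by ring.
  rewrite Rpower_double in Hlo, Hhi.
  set (Q := Rpower h (H * K)) in *; set (A := sigma2_of (R_HK H K) s (s + h)) in *.
  set (c := Rpower 2 (1 - K)) in *.
  assert (HQ : 0 < Q) by apply Rpower_pos.
  assert (HcQ : 0 < c * (Q * Q)) by nra.
  assert (HA : c * (Q * Q) / 2 <= A <= c * (Q * Q)).
  { assert (HAB : A = A / (c * (Q * Q)) * (c * (Q * Q))) by (field; lra).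
    set (y := A / (c * (Q * Q))) in *.
    rewrite HAB; split; nra. }
  assert (HQQ : 0 < Q * Q) by nra.
  assert (Q * Q <= c * (Q * Q) <= 2 * (Q * Q)) by nra.
  apply sqrt_between; lra.
Qed.

Theorem mainTheorem13 (H K T : R) (hH : 0 < H < 1) (hK : 0 < K <= 1) (hT : 0 < T) :
  cond_C1 (sigma_of (R_HK H K)) (H * K) /\
  C2_kappa T (sigma_of (R_HK H K)) (H * K) (rpow 2 ((1 - K) / 2)) /\
  (forall phi, in_Psi T phi ->
     exists d0, 0 < d0 /\ forall delta, 0 < delta < d0 ->
       forall s h, phi delta <= s <= T - delta -> 0 < h <= delta ->
         Rabs (sigma2_of (R_HK H K) s (s + h) / (rpow 2 (1 - K) * rpow h (2 * H * K)) - 1)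
           <= 8 / rpow (phi delta / delta) (2 - 2 * H * K)) /\
  has_Orey_index T (sigma_of (R_HK H K)) (H * K).
Proof.
  split; [apply bifrac_cond_C1|].
  split; [apply bifrac_C2; assumption|].
  split; [intros phi Hpsi; apply bifrac_sigma2_rel_error; assumption|].
  apply has_Orey_index_of_comparable; [exact hT|apply Rmult_lt_0_compat; lra| |].
  - intros h Hh; apply sigma_from_0, Hh.
  - intros phi Hpsi; apply bifrac_sigma_comparable; assumption.
Qed.
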